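(* For every $n\ge2$: (a) there exists an invariant immersed framework in $\mathbb{R}^3$ whose underlying graph is the complete graph $K_{n+2}$ and whose invariance function $\gamma$ is constant; (b) there exists an invariant embedded framework in $\mathbb{R}^n$ whose underlying graph is $K_{n+2}$ and whose invariance function $\gamma$ is constant.
   Context: A framework in $\mathbb{R}^M$ is a finite simple graph $(V,E)$ together with an assignment of a point $\vec x\in\mathbb{R}^M$ to each vertex, edges being straight segments. It is immersed if distinct vertices are assigned distinct points, and embedded if it is immersed and no two edges intersect except at common endpoints. Let $P:\mathbb{R}^M\to\mathbb{C}$, $P(y_1,\dots,y_M)=y_1+iy_2$. The framework is invariant if there is a function $\gamma:V\to\mathbb{R}$ such that for every orthogonal transformation $A$ of $\mathbb{R}^M$, the function $\phi_A(x)=P(A\vec x)$ satisfies, at every vertex $x$ of degree $n(x)$, $\frac{\gamma(x)}{n(x)}\big(\sum_{y\sim x}(\phi_A(y)-\phi_A(x))\big)^2=\sum_{y\sim x}(\phi_A(x)-\phi_A(y))^2$. *)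

From Stdlib Require Import Reals Arith Bool.
Open Scope R_scope.

Fixpoint rsum (n : nat) (f : nat -> R) : R :=
  match n with O => 0 | S k => rsum k f + f k end.

(* Complex numbers as pairs (re, im) *)
Definition cplx := (R * R)%type.
Definition Cadd (z w : cplx) : cplx := (fst z + fst w, snd z + snd w).
Definition Csub (z w : cplx) : cplx := (fst z - fst w, snd z - snd w).
Definition Cmul (z w : cplx) : cplx :=
  (fst z * fst w - snd z * snd w, fst z * snd w + snd z * fst w).
Definition Cscale (r : R) (z : cplx) : cplx := (r * fst z, r * snd z).
Definition Csq (z : cplx) : cplx := Cmul z z.
Fixpoint Csum (n : nat) (f : nat -> cplx) : cplx :=
  match n with O => (0, 0) | S k => Cadd (Csum k f) (f k) end.

(* Points of R^M: functions nat -> R, only coordinates 0..M-1 matter. *)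
Definition vec := nat -> R.
Definition vec_eq (M : nat) (u v : vec) : Prop := forall i, (i < M)%nat -> u i = v i.

Definition orthogonal (M : nat) (A : nat -> nat -> R) : Prop :=
  forall i j, (i < M)%nat -> (j < M)%nat ->
    rsum M (fun k => A k i * A k j) = if Nat.eqb i j then 1 else 0.
Definition mat_apply (M : nat) (A : nat -> nat -> R) (v : vec) : vec :=
  fun i => rsum M (fun j => A i j * v j).

(* P(y_1,...,y_M) = y_1 + i y_2 *)
Definition Pproj (v : vec) : cplx := (v 0%nat, v 1%nat).

Definition simple_graph (N : nat) (adj : nat -> nat -> bool) : Prop :=
  (forall x, (x < N)%nat -> adj x x = false) /\
  (forall x y, (x < N)%nat -> (y < N)%nat -> adj x y = adj y x).

Definition complete_graph (x y : nat) : bool := negb (Nat.eqb x y).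

Definition degree (N : nat) (adj : nat -> nat -> bool) (x : nat) : nat :=
  List.length (List.filter (adj x) (List.seq 0 N)).

(* A framework in R^M on graph (N, adj) is a map p : vertices -> R^M. *)
Definition immersed (M N : nat) (p : nat -> vec) : Prop :=
  forall x y, (x < N)%nat -> (y < N)%nat -> x <> y -> ~ vec_eq M (p x) (p y).

Definition on_segment (M : nat) (a b z : vec) : Prop :=
  exists t, 0 <= t <= 1 /\ forall i, (i < M)%nat -> z i = (1 - t) * a i + t * b i.

Definition same_edge (a b c d : nat) : Prop :=
  (a = c /\ b = d) \/ (a = d /\ b = c).

Definition embedded (M N : nat) (adj : nat -> nat -> bool) (p : nat -> vec) : Prop :=
  immersed M N p /\
  forall a b c d z,
    (a < N)%nat -> (b < N)%nat -> (c < N)%nat -> (d < N)%nat ->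
    adj a b = true -> adj c d = true -> ~ same_edge a b c d ->
    on_segment M (p a) (p b) z -> on_segment M (p c) (p d) z ->
    exists v, (v = a \/ v = b) /\ (v = c \/ v = d) /\ vec_eq M z (p v).

Definition invariant_with (M N : nat) (adj : nat -> nat -> bool) (p : nat -> vec)
    (gamma : nat -> R) : Prop :=
  forall A, orthogonal M A ->
    let phi := fun y => Pproj (mat_apply M A (p y)) in
    forall x, (x < N)%nat ->
      Cscale (gamma x / INR (degree N adj x))
        (Csq (Csum N (fun y => if adj x y then Csub (phi y) (phi x) else (0, 0))))
      = Csum N (fun y => if adj x y then Csq (Csub (phi x) (phi y)) else (0, 0)).

Definition invariant (M N : nat) (adj : nat -> nat -> bool) (p : nat -> vec) : Prop :=
  exists gamma, invariant_with M N adj p gamma.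

(* For the complete graph on N vertices with gamma = (N-1)/N, the
   invariance equation at every vertex reduces (by expanding both sides) to
   the single "balance" identity  N * sum_y phi(y)^2 = (sum_y phi(y))^2.
   If the point cloud is isotropic, i.e. N * sum_y p_y p_y^T - s s^T = lam*I
   with s = sum_y p_y, then for two orthonormal rows u, w of an orthogonal
   matrix the real and imaginary parts of the balance identity follow from
   the bilinear form  (u,w) |-> N sum_y <u,p_y><w,p_y> - <u,s><w,s> = lam <u,w>.

   Isotropic clouds are built from M "axis" points r e_i together with m
   "diagonal" points d_y (1,...,1): their defect N sum_y p_y p_y^T - s s^T is
   N r^2 I + (N D2 - (r + D1)^2) J, so a root r of a quadratic makes it
   scalar.  Part (a) uses M = 3 and d_y = y + 1; part (b) uses M = n with the
   two diagonal points (1,...,1) and 0, and an affine-dependence argument on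
   barycentric weights shows that this cloud is embedded. *)

From Stdlib Require Import Reals Lia Lra List.
From mathcomp Require ssreflect ssrbool eqtype ssrnat fintype bigop ssralg matrix Rstruct.
Open Scope R_scope.

Definition ind (a b : nat) : R := if Nat.eqb a b then 1 else 0.

Lemma ind_sym a b : ind a b = ind b a.
Proof. unfold ind. now rewrite Nat.eqb_sym. Qed.

Lemma rsum_ext n (f g : nat -> R) :
  (forall j, (j < n)%nat -> f j = g j) -> rsum n f = rsum n g.
Proof.
  intro H. induction n; simpl; auto.
  rewrite IHn by (intros; apply H; lia). rewrite H by lia. reflexivity.
Qed.

Lemma rsum_zero n (f : nat -> R) : (forall j, (j < n)%nat -> f j = 0) -> rsum n f = 0.
Proof. intro H. induction n; simpl; auto. rewrite IHn, H by (auto; lia). ring. Qed.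

Lemma rsum_plus n (f g : nat -> R) : rsum n (fun j => f j + g j) = rsum n f + rsum n g.
Proof. induction n; simpl; [ring|]. rewrite IHn. ring. Qed.

Lemma rsum_minus n (f g : nat -> R) : rsum n (fun j => f j - g j) = rsum n f - rsum n g.
Proof. induction n; simpl; [ring|]. rewrite IHn. ring. Qed.

Lemma rsum_scal n c (f : nat -> R) : rsum n (fun j => c * f j) = c * rsum n f.
Proof. induction n; simpl; [ring|]. rewrite IHn. ring. Qed.

Lemma rsum_nonneg n (f : nat -> R) : (forall j, 0 <= f j) -> 0 <= rsum n f.
Proof. intro H. induction n; simpl; [lra|]. specialize (H n). lra. Qed.

Lemma rsum_split M m (F : nat -> R) :
  rsum (M + m) F = rsum M F + rsum m (fun y => F (M + y)%nat).
Proof.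
  induction m; simpl.
  - rewrite Nat.add_0_r. ring.
  - rewrite Nat.add_succ_r. simpl. rewrite IHm. ring.
Qed.

Lemma rsum_swap n m (F : nat -> nat -> R) :
  rsum n (fun i => rsum m (fun j => F i j)) = rsum m (fun j => rsum n (fun i => F i j)).
Proof.
  induction n; simpl.
  - induction m; simpl; [reflexivity|]. rewrite <- IHm. ring.
  - rewrite IHn, <- rsum_plus. reflexivity.
Qed.

Lemma rsum_mul n m (f g : nat -> R) :
  rsum n f * rsum m g = rsum n (fun i => rsum m (fun j => f i * g j)).
Proof.
  induction n; simpl; [ring|].
  rewrite <- IHn, rsum_scal. ring.
Qed.

Lemma rsum_pick n i (f : nat -> R) :
  (i < n)%nat -> rsum n (fun v => ind v i * f v) = f i.
Proof.
  intro Hi. induction n as [|n IH]; [lia|]. simpl.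
  unfold ind at 2. destruct (Nat.eqb_spec n i) as [->|Hne].
  - rewrite rsum_zero; [ring|]. intros j Hj.
    unfold ind. destruct (Nat.eqb_spec j i); [lia|ring].
  - rewrite IH by lia. ring.
Qed.

Definition dot (M : nat) (u v : vec) : R := rsum M (fun j => u j * v j).

Definition orthonormal_rows (M : nat) (A : nat -> nat -> R) : Prop :=
  forall i j, (i < M)%nat -> (j < M)%nat -> dot M (A i) (A j) = ind i j.

(* [orthogonal] only says A^T A = I; the invariance equations use rows 0 and 1
   of A, so we need A A^T = I, which follows since a left inverse of a square
   matrix is also a right inverse. *)
Section RowOrthonormality.
Import ssreflect ssrbool eqtype ssrnat fintype bigop ssralg matrix Rstruct.
Import GRing.Theory.
Local Open Scope ring_scope.

Lemma rsum_bigop n (f : nat -> R) : rsum n f = \sum_(k < n) f k.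
Proof.
elim: n => [|n IH] /=; first by rewrite big_ord0.
by rewrite big_ord_recr /= IH.
Qed.

Lemma eqb_natr (a b : nat) : (Nat.eqb a b)%:R = (if Nat.eqb a b then 1 else 0 : R).
Proof. by case: (Nat.eqb _ _). Qed.

Lemma orthogonal_rows M (A : nat -> nat -> R) : orthogonal M A -> orthonormal_rows M A.
Proof.
move=> HO i j Hi Hj; rewrite /dot /ind.
pose B : 'M[R]_M := \matrix_(a, b) A a b.
have BtB : B^T *m B = 1%:M.
  apply/matrixP => a b; rewrite !mxE.
  have := HO a b (ltP (ltn_ord a)) (ltP (ltn_ord b)).
  rewrite rsum_bigop => Hs.
  have -> : (a == b) = Nat.eqb a b by apply/eqP/Nat.eqb_spec => [->|/val_inj].
  rewrite eqb_natr -Hs.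
  by apply: eq_bigr => k _; rewrite !mxE.
move/matrixP: (mulmx1C BtB) => /(_ (Ordinal (introT ltP Hi)) (Ordinal (introT ltP Hj))).
rewrite !mxE rsum_bigop.
have -> : (Ordinal (introT ltP Hi) == Ordinal (introT ltP Hj)) = Nat.eqb i j.
  by apply/eqP/Nat.eqb_spec => [[]|E]//; apply: val_inj.
rewrite eqb_natr => <-.
by apply: eq_bigr => k _; rewrite !mxE.
Qed.
End RowOrthonormality.

Lemma Csum_pair N (f : nat -> cplx) :
  Csum N f = (rsum N (fun y => fst (f y)), rsum N (fun y => snd (f y))).
Proof. induction N; simpl; auto. rewrite IHN. reflexivity. Qed.

Lemma Csum_sub_const N (phi : nat -> cplx) z :
  Csum N (fun y => Csub (phi y) z) = Csub (Csum N phi) (Cscale (INR N) z).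
Proof.
  induction N; simpl Csum.
  - unfold Csub, Cscale. simpl. f_equal; ring.
  - rewrite IHN, S_INR. destruct (Csum N phi), (phi N), z.
    unfold Csub, Cadd, Cscale. simpl. f_equal; ring.
Qed.

Lemma Csum_sq_sub N (phi : nat -> cplx) z :
  Csum N (fun y => Csq (Csub z (phi y))) =
  Cadd (Cadd (Cscale (INR N) (Csq z)) (Cscale (-2) (Cmul z (Csum N phi))))
       (Csum N (fun y => Csq (phi y))).
Proof.
  induction N; simpl Csum.
  - unfold Cadd, Cscale, Csq, Cmul. simpl. f_equal; ring.
  - rewrite IHN, S_INR. destruct (Csum N phi), (Csum N (fun y => Csq (phi y))), (phi N), z.
    unfold Csub, Cadd, Cscale, Csq, Cmul. simpl. f_equal; ring.
Qed.

(* In K_N every other vertex is a neighbour of x, so a neighbour sum is the full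
   sum as soon as the summand vanishes at x. *)
Lemma Csum_complete_neighbours N x (f : nat -> cplx) : f x = (0, 0) ->
  Csum N (fun y => if complete_graph x y then f y else (0, 0)) = Csum N f.
Proof.
  intro H. induction N; simpl; auto. rewrite IHN. f_equal.
  unfold complete_graph. destruct (Nat.eqb_spec x N); subst; simpl; auto.
Qed.

Lemma complete_graph_edge a b : complete_graph a b = true -> a <> b.
Proof. unfold complete_graph. destruct (Nat.eqb_spec a b); simpl; congruence. Qed.

Lemma degree_complete N x : (x < N)%nat -> degree N complete_graph x = (N - 1)%nat.
Proof.
  intro Hx. unfold degree.
  enough (E : forall K, length (filter (complete_graph x) (seq 0 K)) =
                        if Nat.ltb x K then (K - 1)%nat else K).
  { rewrite E. destruct (Nat.ltb_spec x N); lia. }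
  induction K; [reflexivity|].
  rewrite seq_S, filter_app, length_app, IHK. simpl.
  unfold complete_graph at 1.
  destruct (Nat.eqb_spec x K) as [->|Hne]; simpl.
  - destruct (Nat.ltb_spec K K), (Nat.ltb_spec K (S K)); lia.
  - destruct (Nat.ltb_spec x K), (Nat.ltb_spec x (S K)); lia.
Qed.

(* The algebraic heart of the criterion: with total S and quadratic total Q
   satisfying N Q = S^2, the squared neighbour sum (S - N z)^2, scaled by 1/N,
   equals the sum of squared differences N z^2 - 2 z S + Q. *)
Lemma balance_identity (N : R) (S Q z : cplx) : 1 < N ->
  Cscale N Q = Csq S ->
  Cscale ((N - 1) / N / (N - 1)) (Csq (Csub S (Cscale N z))) =
  Cadd (Cadd (Cscale N (Csq z)) (Cscale (-2) (Cmul z S))) Q.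
Proof.
  intros HN HQ. destruct S as [s1 s2], Q as [q1 q2], z as [z1 z2].
  unfold Cscale, Csq, Cmul, Csub, Cadd in *. simpl in *.
  injection HQ as H1 H2.
  replace q1 with ((s1 * s1 - s2 * s2) / N) by (rewrite <- H1; field; lra).
  replace q2 with ((s1 * s2 + s2 * s1) / N) by (rewrite <- H2; field; lra).
  f_equal; field; lra.
Qed.

Lemma complete_graph_criterion N (phi : nat -> cplx) x :
  (2 <= N)%nat -> (x < N)%nat ->
  Cscale (INR N) (Csum N (fun y => Csq (phi y))) = Csq (Csum N phi) ->
  Cscale (((INR N - 1) / INR N) / INR (degree N complete_graph x))
    (Csq (Csum N (fun y => if complete_graph x y then Csub (phi y) (phi x) else (0, 0))))
  = Csum N (fun y => if complete_graph x y then Csq (Csub (phi x) (phi y)) else (0, 0)).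
Proof.
  intros HN Hx Hbal.
  assert (HNR : 1 < INR N) by (apply (lt_INR 1); lia).
  rewrite degree_complete, minus_INR by lia. simpl (INR 1).
  rewrite !Csum_complete_neighbours.
  - rewrite Csum_sub_const, Csum_sq_sub. now apply balance_identity.
  - destruct (phi x). unfold Csq, Cmul, Csub. simpl. f_equal; ring.
  - destruct (phi x). unfold Csub. simpl. f_equal; ring.
Qed.

Definition vsum (N : nat) (p : nat -> vec) : vec := fun j => rsum N (fun y => p y j).

Definition isotropic (M N : nat) (p : nat -> vec) (lam : R) : Prop :=
  forall i j, (i < M)%nat -> (j < M)%nat ->
    INR N * rsum N (fun y => p y i * p y j) = vsum N p i * vsum N p j + lam * ind i j.

Lemma dot_vsum M N u p : rsum N (fun y => dot M u (p y)) = dot M u (vsum N p).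
Proof.
  unfold dot, vsum. rewrite rsum_swap. apply rsum_ext. intros j _.
  now rewrite rsum_scal.
Qed.

Lemma dot_second_moment M N u w p :
  rsum N (fun y => dot M u (p y) * dot M w (p y)) =
  rsum M (fun j => rsum M (fun k => u j * w k * rsum N (fun y => p y j * p y k))).
Proof.
  unfold dot.
  rewrite (rsum_ext N _ (fun y => rsum M (fun j => rsum M (fun k => u j * w k * (p y j * p y k)))))
    by (intros y _; rewrite rsum_mul; apply rsum_ext; intros j _; apply rsum_ext; intros k _; ring).
  rewrite rsum_swap. apply rsum_ext. intros j _.
  rewrite rsum_swap. apply rsum_ext. intros k _.
  now rewrite rsum_scal.
Qed.

Lemma isotropic_bilinear M N p lam u w : isotropic M N p lam ->
  INR N * rsum N (fun y => dot M u (p y) * dot M w (p y)) =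
  dot M u (vsum N p) * dot M w (vsum N p) + lam * dot M u w.
Proof.
  intro Hiso. rewrite dot_second_moment, <- rsum_scal.
  rewrite (rsum_ext M _ (fun j => dot M w (vsum N p) * (u j * vsum N p j) + lam * (u j * w j))).
  - rewrite rsum_plus, !rsum_scal. unfold dot. ring.
  - intros j Hj. rewrite <- rsum_scal.
    rewrite (rsum_ext M _ (fun k => u j * vsum N p j * (w k * vsum N p k) +
                                    lam * u j * (ind k j * w k))).
    + rewrite rsum_plus, !rsum_scal, rsum_pick by exact Hj. unfold dot. ring.
    + intros k Hk.
      transitivity (u j * w k * (INR N * rsum N (fun y => p y j * p y k))); [ring|].
      rewrite Hiso, ind_sym by assumption. ring.
Qed.

Lemma isotropic_invariant M N p lam : (2 <= M)%nat -> (2 <= N)%nat ->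
  isotropic M N p lam ->
  invariant_with M N complete_graph p (fun _ => (INR N - 1) / INR N).
Proof.
  intros HM HN Hiso A HA phi x Hx.
  assert (Hrows := orthogonal_rows M A HA).
  change phi with (fun y => (dot M (A 0%nat) (p y), dot M (A 1%nat) (p y))).
  apply complete_graph_criterion; auto.
  rewrite !Csum_pair. unfold Cscale, Csq, Cmul. simpl. f_equal.
  - rewrite rsum_minus, Rmult_minus_distr_l, !isotropic_bilinear with (lam := lam) by exact Hiso.
    rewrite !dot_vsum, (Hrows 0%nat 0%nat), (Hrows 1%nat 1%nat) by lia.
    unfold ind. simpl. ring.
  - rewrite rsum_plus, Rmult_plus_distr_l, !isotropic_bilinear with (lam := lam) by exact Hiso.
    rewrite !dot_vsum, (Hrows 0%nat 1%nat), (Hrows 1%nat 0%nat) by lia.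
    unfold ind. simpl. ring.
Qed.

Definition axis_diag (M : nat) (r : R) (d : nat -> R) : nat -> vec :=
  fun v i => if Nat.ltb v M then r * ind v i else d (v - M)%nat.

Lemma axis_diag_vsum M m r d i : (i < M)%nat ->
  vsum (M + m) (axis_diag M r d) i = r + rsum m d.
Proof.
  intro Hi. unfold vsum. rewrite rsum_split. f_equal.
  - rewrite (rsum_ext M _ (fun v => ind v i * r)).
    + rewrite rsum_pick by assumption. reflexivity.
    + intros v Hv. unfold axis_diag. destruct (Nat.ltb_spec v M); [ring|lia].
  - apply rsum_ext. intros y _. unfold axis_diag.
    destruct (Nat.ltb_spec (M + y) M); [lia|]. f_equal. lia.
Qed.

Lemma axis_diag_moment M m r d i j : (i < M)%nat -> (j < M)%nat ->
  rsum (M + m) (fun v => axis_diag M r d v i * axis_diag M r d v j) =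
  r * r * ind i j + rsum m (fun y => d y * d y).
Proof.
  intros Hi Hj. rewrite rsum_split. f_equal.
  - rewrite (rsum_ext M _ (fun v => ind v i * (r * r * ind v j))).
    + rewrite rsum_pick by assumption. reflexivity.
    + intros v Hv. unfold axis_diag. destruct (Nat.ltb_spec v M); [ring|lia].
  - apply rsum_ext. intros y _. unfold axis_diag.
    destruct (Nat.ltb_spec (M + y) M); [lia|]. replace (M + y - M)%nat with y by lia.
    reflexivity.
Qed.

(* The defect N sum p p^T - s s^T of an axis-diagonal cloud is
   N r^2 I + (N D2 - (r + D1)^2) J; this root r of the quadratic kills the J part. *)
Definition axis_radius (N m : nat) (d : nat -> R) : R :=
  - (sqrt (INR N * rsum m (fun y => d y * d y)) + rsum m d).

Lemma axis_radius_root N m d :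
  INR N * rsum m (fun y => d y * d y) = (axis_radius N m d + rsum m d) * (axis_radius N m d + rsum m d).
Proof.
  unfold axis_radius.
  assert (H : 0 <= INR N * rsum m (fun y => d y * d y)).
  { apply Rmult_le_pos; [apply pos_INR|]. apply rsum_nonneg. intro. apply Rle_0_sqr. }
  rewrite <- (sqrt_sqrt _ H) at 1. ring.
Qed.

Lemma axis_radius_neg N m d : 0 < rsum m d -> axis_radius N m d < 0.
Proof.
  intro H. unfold axis_radius.
  pose proof (sqrt_pos (INR N * rsum m (fun y => d y * d y))). lra.
Qed.

Definition balanced_cloud (M m : nat) (d : nat -> R) : nat -> vec :=
  axis_diag M (axis_radius (M + m) m d) d.

Lemma balanced_cloud_isotropic M m d :
  isotropic M (M + m) (balanced_cloud M m d)
    (INR (M + m) * axis_radius (M + m) m d * axis_radius (M + m) m d).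
Proof.
  intros i j Hi Hj. unfold balanced_cloud.
  rewrite axis_diag_moment, !axis_diag_vsum by assumption.
  rewrite Rmult_plus_distr_l, axis_radius_root. ring.
Qed.

(* Distinct axis points are distinct (r <> 0), an axis point is never on the
   diagonal (it has a zero and a nonzero coordinate), and diagonal points are
   distinct when the d_y are. *)
Lemma axis_diag_immersed M m r d : (2 <= M)%nat -> r <> 0 ->
  (forall y y', (y < m)%nat -> (y' < m)%nat -> d y = d y' -> y = y') ->
  immersed M (M + m) (axis_diag M r d).
Proof.
  intros HM Hr Hd.
  assert (Hoff : forall x y, (x < M)%nat -> (M <= y)%nat ->
                 ~ vec_eq M (axis_diag M r d x) (axis_diag M r d y)).
  { intros x y Hx Hy Heq. set (k := if Nat.eqb x 0 then 1%nat else 0%nat).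
    assert (Hk : (k < M)%nat /\ x <> k)
      by (unfold k; destruct (Nat.eqb_spec x 0); split; lia).
    pose proof (Heq x Hx) as Ex. pose proof (Heq k (proj1 Hk)) as Ek.
    unfold axis_diag, ind in Ex, Ek.
    destruct (Nat.ltb_spec x M), (Nat.ltb_spec y M); try lia.
    rewrite Nat.eqb_refl in Ex. destruct (Nat.eqb_spec x k); [lia|]. lra. }
  intros x y Hx Hy Hxy Heq.
  destruct (Nat.ltb_spec x M), (Nat.ltb_spec y M).
  - specialize (Heq x ltac:(assumption)). unfold axis_diag, ind in Heq.
    destruct (Nat.ltb_spec x M), (Nat.ltb_spec y M); try lia.
    rewrite Nat.eqb_refl in Heq. destruct (Nat.eqb_spec y x); [lia|]. lra.
  - exact (Hoff x y ltac:(assumption) ltac:(lia) Heq).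
  - apply (Hoff y x ltac:(assumption) ltac:(lia)). intros i Hi. symmetry. auto.
  - specialize (Heq 0%nat ltac:(lia)). unfold axis_diag in Heq.
    destruct (Nat.ltb_spec x M), (Nat.ltb_spec y M); try lia.
    apply Hd in Heq; lia.
Qed.

Definition seg_weight (a b : nat) (l : R) (v : nat) : R := (1 - l) * ind a v + l * ind b v.

Lemma seg_weight_nonneg a b l v : 0 <= l <= 1 -> 0 <= seg_weight a b l v.
Proof. intro Hl. unfold seg_weight, ind. destruct (Nat.eqb a v), (Nat.eqb b v); lra. Qed.

Lemma seg_weight_support a b l v : 0 < seg_weight a b l v -> v = a \/ v = b.
Proof.
  unfold seg_weight, ind. destruct (Nat.eqb_spec a v), (Nat.eqb_spec b v); auto. lra.
Qed.

Lemma seg_weight_total N a b l : (a < N)%nat -> (b < N)%nat -> rsum N (seg_weight a b l) = 1.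
Proof.
  intros Ha Hb.
  rewrite (rsum_ext N _ (fun v => ind v a * (1 - l) + ind v b * l)).
  - rewrite rsum_plus, !rsum_pick by assumption. ring.
  - intros v _. unfold seg_weight. rewrite (ind_sym a), (ind_sym b). ring.
Qed.

Lemma shared_endpoint a b c d l mu : a <> b -> ~ same_edge a b c d -> 0 <= l <= 1 ->
  seg_weight a b l a = seg_weight c d mu a -> seg_weight a b l b = seg_weight c d mu b ->
  (l = 0 /\ (a = c \/ a = d)) \/ (l = 1 /\ (b = c \/ b = d)).
Proof.
  intros Hab Hse Hl Ea Eb.
  assert (Wa : seg_weight a b l a = 1 - l).
  { unfold seg_weight, ind. rewrite Nat.eqb_refl. destruct (Nat.eqb_spec b a); [lia|ring]. }
  assert (Wb : seg_weight a b l b = l).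
  { unfold seg_weight, ind. rewrite Nat.eqb_refl. destruct (Nat.eqb_spec a b); [lia|ring]. }
  assert (Ma : 0 < 1 - l -> a = c \/ a = d).
  { intro H. apply (seg_weight_support c d mu). congruence. }
  assert (Mb : 0 < l -> b = c \/ b = d).
  { intro H. apply (seg_weight_support c d mu). congruence. }
  destruct (Req_dec l 0) as [L0|L0]; [left; split; auto; apply Ma; lra|].
  destruct (Req_dec l 1) as [L1|L1]; [right; split; auto; apply Mb; lra|].
  exfalso. apply Hse. unfold same_edge.
  destruct (Ma ltac:(lra)), (Mb ltac:(lra)); subst; tauto.
Qed.

Definition corner_radius (n : nat) : R := axis_radius (n + 2) 2 (fun y => ind y 0).

Definition corner_cloud (n : nat) : nat -> vec := axis_diag n (corner_radius n) (fun y => ind y 0).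

Lemma corner_radius_neg n : corner_radius n < 0.
Proof. apply axis_radius_neg. unfold ind. simpl. lra. Qed.

Lemma corner_cloud_coord n v i : (v < n + 2)%nat -> (i < n)%nat ->
  corner_cloud n v i = corner_radius n * ind v i + ind v n.
Proof.
  intros Hv Hi. unfold corner_cloud, axis_diag, ind.
  destruct (Nat.ltb_spec v n), (Nat.eqb_spec v i), (Nat.eqb_spec (v - n) 0), (Nat.eqb_spec v n);
    try lia; ring.
Qed.

Lemma corner_segment_coord n a b l i : (a < n + 2)%nat -> (b < n + 2)%nat -> (i < n)%nat ->
  (1 - l) * corner_cloud n a i + l * corner_cloud n b i =
  corner_radius n * seg_weight a b l i + seg_weight a b l n.
Proof. intros Ha Hb Hi. rewrite !corner_cloud_coord by assumption. unfold seg_weight. ring. Qed.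

(* The unique affine dependence of the corner cloud has a single coefficient of
   its sign at vertex n.  Hence if a segment weight W exceeds another weight
   vector W' at n, it exceeds it at every i < n as well, so W would be supported
   on the three vertices 0, 1, n: impossible for a segment. *)
Lemma weight_gap n r a b l (W : nat -> R) : (2 <= n)%nat -> r < 0 ->
  (forall v, 0 <= W v) ->
  (forall i, (i < n)%nat -> r * seg_weight a b l i + seg_weight a b l n = r * W i + W n) ->
  ~ W n < seg_weight a b l n.
Proof.
  intros Hn Hr HW Heq Hlt.
  assert (Hpos : forall i, (i < n)%nat -> 0 < seg_weight a b l i).
  { intros i Hi. specialize (Heq i Hi). specialize (HW i). nra. }
  assert (Hposn : 0 < seg_weight a b l n) by (specialize (HW n); lra).
  destruct (seg_weight_support _ _ _ _ (Hpos 0%nat ltac:(lia))),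
           (seg_weight_support _ _ _ _ (Hpos 1%nat ltac:(lia))),
           (seg_weight_support _ _ _ _ Hposn); lia.
Qed.

Lemma corner_weights_agree n a b c d l mu (z : vec) : (2 <= n)%nat ->
  (a < n + 2)%nat -> (b < n + 2)%nat -> (c < n + 2)%nat -> (d < n + 2)%nat ->
  0 <= l <= 1 -> 0 <= mu <= 1 ->
  (forall i, (i < n)%nat -> z i = (1 - l) * corner_cloud n a i + l * corner_cloud n b i) ->
  (forall i, (i < n)%nat -> z i = (1 - mu) * corner_cloud n c i + mu * corner_cloud n d i) ->
  forall v, (v < n + 2)%nat -> seg_weight a b l v = seg_weight c d mu v.
Proof.
  intros Hn Ha Hb Hc Hd Hl Hmu Hz1 Hz2.
  pose proof (corner_radius_neg n) as Hr.
  assert (Hchart : forall i, (i < n)%nat ->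
    corner_radius n * seg_weight a b l i + seg_weight a b l n =
    corner_radius n * seg_weight c d mu i + seg_weight c d mu n).
  { intros i Hi. rewrite <- !corner_segment_coord, <- Hz1, <- Hz2 by assumption. reflexivity. }
  assert (Hn_eq : seg_weight a b l n = seg_weight c d mu n).
  { destruct (Rtotal_order (seg_weight c d mu n) (seg_weight a b l n)) as [Hlt|[Heq|Hgt]].
    - exfalso. refine (weight_gap n _ a b l _ Hn Hr _ Hchart Hlt).
      intro. now apply seg_weight_nonneg.
    - auto.
    - exfalso. refine (weight_gap n _ c d mu _ Hn Hr _ _ Hgt).
      + intro. now apply seg_weight_nonneg.
      + intros i Hi. symmetry. auto. }
  assert (Hlow : forall v, (v <= n)%nat -> seg_weight a b l v = seg_weight c d mu v).
  { intros v Hv. destruct (Nat.eq_dec v n) as [->|Hne]; [exact Hn_eq|].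
    apply (Rmult_eq_reg_l (corner_radius n)); [|lra].
    specialize (Hchart v ltac:(lia)). lra. }
  intros v Hv. destruct (Nat.eq_dec v (S n)) as [->|Hne]; [|apply Hlow; lia].
  pose proof (seg_weight_total (n + 2) a b l Ha Hb) as Tab.
  pose proof (seg_weight_total (n + 2) c d mu Hc Hd) as Tcd.
  replace (n + 2)%nat with (S (S n)) in Tab, Tcd by lia. simpl in Tab, Tcd.
  rewrite (rsum_ext n (seg_weight a b l) (seg_weight c d mu)) in Tab
    by (intros; apply Hlow; lia).
  rewrite Hn_eq in Tab. lra.
Qed.

Lemma corner_cloud_embedded n : (2 <= n)%nat ->
  embedded n (n + 2) complete_graph (corner_cloud n).
Proof.
  intro Hn. split.
  - apply axis_diag_immersed; auto.
    + pose proof (corner_radius_neg n). lra.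
    + intros y y' Hy Hy' E. unfold ind in E.
      destruct y as [|[|]], y' as [|[|]]; simpl in E; lra || lia.
  - intros a b c d z Ha Hb Hc Hd Eab Ecd Hse [l [Hl Hz1]] [mu [Hmu Hz2]].
    pose proof (corner_weights_agree n a b c d l mu z Hn Ha Hb Hc Hd Hl Hmu Hz1 Hz2) as Hw.
    destruct (shared_endpoint a b c d l mu (complete_graph_edge a b Eab) Hse Hl
                (Hw a Ha) (Hw b Hb)) as [[-> Hv] | [-> Hv]].
    + exists a. repeat split; auto. intros j Hj. rewrite Hz1 by assumption. ring.
    + exists b. repeat split; auto. intros j Hj. rewrite Hz1 by assumption. ring.
Qed.

Theorem corollary5p4 : forall n : nat, (2 <= n)%nat ->
  (exists p : nat -> vec,
     immersed 3 (n + 2) p /\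
     exists c : R, invariant_with 3 (n + 2) complete_graph p (fun _ => c)) /\
  (exists p : nat -> vec,
     embedded n (n + 2) complete_graph p /\
     exists c : R, invariant_with n (n + 2) complete_graph p (fun _ => c)).
Proof.
  intros n Hn. split.
  -
    replace (n + 2)%nat with (3 + (n - 1))%nat by lia.
    set (d := fun y => INR (S y)).
    assert (Hd : 0 < rsum (n - 1) d).
    { destruct (n - 1)%nat as [|k] eqn:E; [lia|]. simpl.
      pose proof (rsum_nonneg k d (fun y => pos_INR (S y))).
      pose proof (lt_0_INR (S k) ltac:(lia)). change (d k) with (INR (S k)). lra. }
    exists (balanced_cloud 3 (n - 1) d). split.
    + apply axis_diag_immersed; [lia| |].
      * pose proof (axis_radius_neg (3 + (n - 1)) (n - 1) d Hd). lra.
      * intros y y' _ _ E. apply INR_eq in E. lia.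
    + eexists. exact (isotropic_invariant 3 (3 + (n - 1)) _ _ ltac:(lia) ltac:(lia)
                        (balanced_cloud_isotropic 3 (n - 1) d)).
  -
    exists (corner_cloud n). split; [now apply corner_cloud_embedded|].
    eexists. exact (isotropic_invariant n (n + 2) _ _ Hn ltac:(lia)
                      (balanced_cloud_isotropic n 2 (fun y => ind y 0))).
Qed.
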